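(* Let $G$ be a simple (prop-int, tree)-graph, let $v$ be a pendant vertex of $G$ (a vertex of degree exactly $1$), and let $\widehat{G}$ be obtained from $G$ by attaching a degree-2-tail of length $\ell\ge 1$ at $v$, i.e., adding new vertices $u_1,\dots,u_\ell$ and edges $vu_1$ and $u_iu_{i+1}$ for $1\le i\le \ell-1$. Then $\widehat{G}$ is a simple (prop-int, tree)-graph.
   Context: A simple undirected graph is a (prop-int, tree)-graph if every connected component of it is a proper interval graph or a tree. *)

From Stdlib Require Import Reals.
From mathcomp Require Import all_boot.
Set Implicit Arguments. Unset Strict Implicit. Unset Printing Implicit Defensive.

Definition simple_graph (T : finType) (e : rel T) : Prop :=
  symmetric e /\ irreflexive e.

Definition component (T : finType) (e : rel T) (x : T) : {set T} :=
  [set y | connect e x y].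

Definition induced (T : finType) (e : rel T) (C : {set T}) : rel T :=
  [rel x y | [&& x \in C, y \in C & e x y]].

Definition proper_interval_on (T : finType) (e : rel T) (C : {set T}) : Prop :=
  exists a b : T -> R,
    (forall x, x \in C -> Rle (a x) (b x)) /\
    (forall x y, x \in C -> y \in C -> x != y ->
       (e x y <-> Rle (Rmax (a x) (a y)) (Rmin (b x) (b y)))) /\
    (forall x y, x \in C -> y \in C ->
       ~ (Rle (a y) (a x) /\ Rle (b x) (b y) /\ (a x <> a y \/ b x <> b y))).

Definition has_cycle_on (T : finType) (e : rel T) (C : {set T}) : Prop :=
  exists c : seq T, [/\ 3 <= size c, uniq c, all (fun x => x \in C) c
                       & cycle e c].

Definition tree_on (T : finType) (e : rel T) (C : {set T}) : Prop :=
  (forall x y, x \in C -> y \in C -> connect (induced e C) x y) /\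
  ~ has_cycle_on e C.

Definition prop_int_tree (T : finType) (e : rel T) : Prop :=
  forall x : T, proper_interval_on e (component e x) \/ tree_on e (component e x).

(* Attaching a tail of length l at v: new vertices inr i (i < l), where
   inr i represents u_{i+1}; edges v u_1 and u_i u_{i+1}. *)
Definition tail_rel (T : finType) (e : rel T) (v : T) (l : nat)
  : rel (T + 'I_l) :=
  fun p q =>
    match p, q with
    | inl x, inl y => e x y
    | inl x, inr j => (x == v) && (val j == 0)
    | inr i, inl y => (y == v) && (val i == 0)
    | inr i, inr j => ((val i).+1 == val j) || ((val j).+1 == val i)
    end.
Arguments tail_rel {T} e v l.

From Stdlib Require Import Reals Lra.
From mathcomp Require Import all_boot zify.
Set Implicit Arguments. Unset Strict Implicit. Unset Printing Implicit Defensive.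

(* Attaching the tail only changes the component K of v, which becomes K with a
   path hanging from v.  If K is a tree, so is the new component: a cycle would
   pass through its tail vertex of largest index, which has a single neighbour on
   the cycle.  If K is a proper interval graph with intervals [a x, b x], reflect
   the line if necessary so that the unique neighbour w of v has b w <= b v.
   Then every interval other than those of v and w ends before a v, so v can be
   moved to a fresh interval [c, c+1] at the far right, the interval of w
   stretched to end at c, and the tail laid out as the unit intervals
   [c+1+j, c+2+j]. *)

Lemma connect_ind (T : finType) (e : rel T) (P : T -> Prop) x :
  P x -> (forall y z, connect e x y -> e y z -> P y -> P z) ->
  forall y, connect e x y -> P y.
Proof.
move=> Px step _ /connectP [p xp ->].
elim/last_ind: p xp => [//|p z IHp]; rewrite rcons_path last_rcons => /andP [xp ez].
by apply: step ez (IHp xp); apply/connectP; exists p.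
Qed.

Lemma connect_homo (T1 T2 : finType) (e1 : rel T1) (e2 : rel T2) (f : T1 -> T2) :
  {homo f : x y / e1 x y >-> connect e2 x y} ->
  {homo f : x y / connect e1 x y >-> connect e2 x y}.
Proof.
move=> fe x; apply: connect_ind => [|y z _ yz xy]; first exact: connect0.
exact: connect_trans xy (fe _ _ yz).
Qed.

Lemma connect_induced_component (T : finType) (e : rel T) x : symmetric e ->
  forall y z, y \in component e x -> z \in component e x ->
  connect (induced e (component e x)) y z.
Proof.
move=> se.
have from_x : forall y, connect e x y -> connect (induced e (component e x)) x y.
  apply: connect_ind => [|z t xz ezt xz']; first exact: connect0.
  apply: connect_trans xz' (connect1 _).
  by rewrite /induced /= !inE xz (connect_trans xz (connect1 ezt)).
have sym_induced : connect_sym (induced e (component e x)).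
  by apply: sym_connect_sym => y z; rewrite /induced /= se andbCA.
move=> y z; rewrite !inE => xy xz.
by apply: connect_trans (from_x _ xz); rewrite sym_induced from_x.
Qed.

Lemma next_neq_prev (T : eqType) (c : seq T) x :
  uniq c -> 2 < size c -> x \in c -> next c x != prev c x.
Proof.
move=> uc c3 xc; apply/eqP => next_prev_x.
have: next c (next c x) = x by rewrite {1}next_prev_x next_prev.
case: (rot_to xc) => i s def_c.
rewrite -!(next_rot i uc) def_c.
have: uniq (x :: s) by rewrite -def_c rot_uniq.
move: c3; rewrite -(size_rot i) def_c.
case: s {def_c} => [|y [|z s]] //= _.
rewrite !inE !negb_or => /andP [/and3P [xy xz _] _].
by rewrite eqxx eq_sym (negbTE xy) eqxx => /eqP; rewrite eq_sym (negbTE xz).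
Qed.

Section Tail.

Variables (T : finType) (e : rel T) (v : T) (l : nat).
Hypothesis se : symmetric e.

Local Notation tail := (tail_rel e v l).

Definition tail_proj (p : T + 'I_l) : T := if p is inl x then x else v.

Lemma tail_sym : symmetric tail.
Proof. by move=> [x|i] [y|j] //=; rewrite ?se // orbC. Qed.

Lemma tail_irreflexive : irreflexive e -> irreflexive tail.
Proof. by move=> ie [x|i] /=; rewrite ?ie // orbb eq_sym (ltn_eqF (ltnSn _)). Qed.

Lemma connect_tail_root (i : 'I_l) : connect tail (inl v) (inr i).
Proof.
case: i => k; elim: k => [|k IHk] lt_k_l; first by apply: connect1; rewrite /= eqxx.
by apply: connect_trans (IHk (ltnW lt_k_l)) (connect1 _); rewrite /= eqxx.
Qed.

Lemma connect_tail p q : connect tail p q = connect e (tail_proj p) (tail_proj q).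
Proof.
apply/idP/idP.
  apply: connect_homo => {p q} [[x|i] [y|j]] /=; first exact: connect1.
  - by case/andP => /eqP -> _; exact: connect0.
  - by case/andP => /eqP -> _; exact: connect0.
  - by move=> _; exact: connect0.
have to_proj r : connect tail r (inl (tail_proj r)).
  by case: r => [x|i]; rewrite ?connect0 // (sym_connect_sym tail_sym) connect_tail_root.
have inl_edge x y : e x y -> connect tail (inl x) (inl y) by exact: connect1.
move/(connect_homo inl_edge) => pq.
apply: connect_trans (to_proj p) (connect_trans pq _).
by rewrite (sym_connect_sym tail_sym).
Qed.

Lemma component_tail p :
  component tail p = [set q | tail_proj q \in component e (tail_proj p)].
Proof. by apply/setP => q; rewrite !inE connect_tail. Qed.

Lemma tail_off_cycle (c : seq (T + 'I_l)) :
  uniq c -> 2 < size c -> cycle tail c -> forall j, inr j \notin c.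
Proof.
move=> uc c3 cc j0; apply/negP => j0c.
case: (@arg_maxnP _ j0 (fun j => inr j \in c) val j0c) => i ic i_max.
have le_i j : inr j \in c -> j <= i by move/i_max.
have one_nbr : {in c &, forall q1 q2, tail (inr i) q1 -> tail (inr i) q2 -> q1 = q2}.
  move=> [x1|j1] [x2|j2] c1 c2 /=.
  - by move=> /andP [/eqP -> _] /andP [/eqP -> _].
  - by have := le_i _ c2; move=> ? /andP [_ /eqP] ? /orP [] /eqP ?; exfalso; lia.
  - by have := le_i _ c1; move=> ? /orP [] /eqP ? /andP [_ /eqP] ?; exfalso; lia.
  - have := le_i _ c1; have := le_i _ c2.
    move=> ? ? /orP [] /eqP ? /orP [] /eqP ?; try (exfalso; lia).
    by congr inr; apply: ord_inj; lia.
have next_in : next c (inr i) \in c by rewrite mem_next.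
have prev_in : prev c (inr i) \in c by rewrite mem_prev.
have prev_nbr : tail (inr i) (prev c (inr i)) by rewrite tail_sym; exact: prev_cycle.
have := next_neq_prev uc c3 ic.
by rewrite (one_nbr _ _ next_in prev_in (next_cycle cc ic) prev_nbr) eqxx.
Qed.

Lemma tail_acyclic (C : {set T}) :
  ~ has_cycle_on e C -> ~ has_cycle_on tail [set q | tail_proj q \in C].
Proof.
move=> noC [c [c3 uc cC cc]]; apply: noC.
have [c0 def_c] : exists c0, c = map inl c0.
  exists (map tail_proj c); rewrite -map_comp map_id_in // => -[x|j] // jc.
  by have := tail_off_cycle uc c3 cc j; rewrite jc.
subst c; exists c0; split.
- by rewrite size_map in c3.
- by rewrite (map_inj_uniq inl_inj) in uc.
- by move: cC; rewrite all_map; apply: sub_all => x; rewrite /= inE.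
- by rewrite cycle_map in cc.
Qed.

End Tail.

Section IntervalRepresentation.

Variables (T : finType) (e : rel T).

Local Open Scope R_scope.

Lemma Rmax_le_Rmin (p q r s : R) :
  Rmax p q <= Rmin r s <-> p <= r /\ p <= s /\ q <= r /\ q <= s.
Proof. unfold Rmax, Rmin; destruct (Rle_dec p q), (Rle_dec r s); intuition lra. Qed.

Definition proper_interval_rep (C : {set T}) (a b : T -> R) :=
  (forall x, x \in C -> a x <= b x) /\
  (forall x y, x \in C -> y \in C -> x != y ->
     (e x y <-> Rmax (a x) (a y) <= Rmin (b x) (b y))) /\
  (forall x y, x \in C -> y \in C ->
     ~ (a y <= a x /\ b x <= b y /\ (a x <> a y \/ b x <> b y))).

Definition rightmost_interval (C : {set T}) (a b : T -> R) v :=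
  a v < b v /\ forall x, x \in C -> x != v -> b x < b v.

Lemma proper_interval_rep_opp C a b :
  proper_interval_rep C a b -> proper_interval_rep C (fun x => - b x) (fun x => - a x).
Proof.
move=> [ab [adj nest]]; split; [|split].
- by move=> x /ab; lra.
- move=> x y xC yC xy; rewrite (adj x y xC yC xy) !Rmax_le_Rmin; intuition lra.
- move=> x y xC yC [? [? nxy]]; apply: (nest x y xC yC); split; [lra|split; [lra|]].
  case: nxy => ?; [right|left]; lra.
Qed.

End IntervalRepresentation.

Section Pendant.

Variables (T : finType) (e : rel T) (v w : T).
Hypotheses (se : symmetric e) (ie : irreflexive e).
Hypotheses (evw : e v w) (v_nbr : forall y, e v y -> y = w).

Local Notation C := (component e v).
Local Open Scope R_scope.

Let vC : v \in C. Proof. by rewrite inE connect0. Qed.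
Let wC : w \in C. Proof. by rewrite inE connect1. Qed.
Let vw : v != w. Proof. by apply: contraTneq evw => <-; rewrite ie. Qed.

Lemma left_of_pendant a b : proper_interval_rep e C a b -> b w <= b v ->
  forall x, x \in C -> x != v -> x != w -> b x < a v.
Proof.
move=> [ab [adj _]] bwv x; rewrite inE => vx.
suff: x = v \/ x = w \/ b x < a v by case=> [->|[->|//]]; rewrite eqxx.
move: x vx; apply: connect_ind => [|y z vy yz IHy]; first by left.
have yC : y \in C by rewrite inE.
have zC : z \in C by rewrite inE (connect_trans vy (connect1 yz)).
case: (eqVneq z v) => [->|zv]; first by left.
case: (eqVneq z w) => [->|zw]; first by right; left.
right; right.
have byv : b y <= b v.
  case: IHy => [yv|[->//|]]; last by have := ab v vC; lra.
  by move: yz; rewrite yv => /v_nbr zw'; rewrite zw' eqxx in zw.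
have yz' : y != z by apply: contraTneq yz => ->; rewrite ie.
have := (adj y z yC zC yz').1 yz; rewrite Rmax_le_Rmin => -[_ [_ [azby _]]].
(* Otherwise z would meet v, as a z <= b y <= b v. *)
apply: Rnot_le_lt => avbz; apply/(negP zw)/eqP/v_nbr.
apply/(adj v z vC zC); first by rewrite eq_sym.
by rewrite Rmax_le_Rmin; have := ab v vC; have := ab z zC; intuition lra.
Qed.

Lemma pendant_nbr_reaches a b : proper_interval_rep e C a b -> a v <= b w.
Proof.
case=> ab [adj _].
by have := (adj v w vC wC vw).1 evw; rewrite Rmax_le_Rmin; intuition lra.
Qed.

Lemma pendant_right_end_max a b : proper_interval_rep e C a b -> b w <= b v ->
  forall x, x \in C -> b x <= b v.
Proof.
move=> rep bwv x xC; case: (eqVneq x v) => [->|xv]; first lra.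
case: (eqVneq x w) => [->//|xw]; have [ab _] := rep.
by have := left_of_pendant rep bwv xC xv xw; have := ab v vC; lra.
Qed.

Lemma left_of_pendant_nbr a b : proper_interval_rep e C a b -> b w <= b v ->
  forall x, x \in C -> x != v -> x != w -> a x < a w.
Proof.
move=> rep bwv x xC xv xw; have bxav := left_of_pendant rep bwv xC xv xw.
have avbw := pendant_nbr_reaches rep.
have [_ [_ nest]] := rep; apply: Rnot_le_lt => awax.
apply: (nest x w xC wC); split; [lra|split; [lra|right; lra]].
Qed.

Definition relocate_left (a : T -> R) c x := if x == v then c else a x.
Definition relocate_right (b : T -> R) c x :=
  if x == v then c + 1 else if x == w then c else b x.

Lemma relocate_rep a b c : proper_interval_rep e C a b -> b w <= b v -> b v < c ->
  proper_interval_rep e C (relocate_left a c) (relocate_right b c).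
Proof.
move=> rep bwv bvc; have ends_before_v := left_of_pendant rep bwv.
have le_bv := pendant_right_end_max rep bwv.
have before_w := left_of_pendant_nbr rep bwv.
have avbw := pendant_nbr_reaches rep.
case: rep => [ab [adj nest]].
rewrite /proper_interval_rep /relocate_left /relocate_right.
have adj_v y : y \in C -> y != v -> e v y <->
    Rmax c (a y) <= Rmin (c + 1) (if y == w then c else b y).
  move=> yC yv; rewrite Rmax_le_Rmin.
  case: (eqVneq y w) => [->|yw]; first by have := ab w wC; intuition lra.
  split=> [/v_nbr yw'|]; first by rewrite yw' eqxx in yw.
  by have := ends_before_v y yC yv yw; intuition lra.
split; [|split].
- move=> x xC; case: (eqVneq x v) => [_|xv]; first lra.
  by case: ifP => _; have := ab x xC; have := le_bv x xC; lra.
- move=> x y xC yC xy.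
  case: (eqVneq x v) => [xv|xv].
    by move: xy; rewrite xv eq_sym => yv; rewrite (negbTE yv); exact: adj_v.
  case: (eqVneq y v) => [yv|yv].
    by rewrite yv se Rmax_comm Rmin_comm; exact: adj_v.
  rewrite (adj x y xC yC xy) !Rmax_le_Rmin.
  have := ab x xC; have := ab y yC; have := le_bv x xC; have := le_bv y yC.
  case: (eqVneq x w) => [xw|xw]; case: (eqVneq y w) => [yw|yw].
  + by rewrite xw yw eqxx in xy.
  + by rewrite xw; have := ends_before_v y yC yv yw; intuition lra.
  + by rewrite yw; have := ends_before_v x xC xv xw; intuition lra.
  + by [].
- move=> x y xC yC.
  case: (eqVneq x v) => [_|xv]; case: (eqVneq y v) => [_|yv].
  + by case=> _ [_ []].
  + by have := le_bv y yC; case: ifP => _; lra.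
  + by have := ab x xC; have := le_bv x xC; case: ifP => _; lra.
  have := nest x y xC yC.
  case: (eqVneq x w) => [->|xw]; case: (eqVneq y w) => [->|yw] //.
  + by move=> _ [_ [_ []]].
  + by have := le_bv y yC; lra.
  + by have := before_w x xC xv xw; lra.
Qed.

Lemma pendant_rightmost_rep a b : proper_interval_rep e C a b -> b w <= b v ->
  exists a' b', proper_interval_rep e C a' b' /\ rightmost_interval C a' b' v.
Proof.
move=> rep bwv; exists (relocate_left a (b v + 1)), (relocate_right b (b v + 1)).
split; first by apply: relocate_rep => //; lra.
rewrite /rightmost_interval /relocate_left /relocate_right eqxx; split; first lra.
move=> x xC xv; rewrite (negbTE xv); have := pendant_right_end_max rep bwv xC.
by case: ifP => _; lra.
Qed.

Lemma exists_rightmost_rep : proper_interval_on e C ->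
  exists a b, proper_interval_rep e C a b /\ rightmost_interval C a b v.
Proof.
move=> [a [b rep]].
have [bwv|bvw] := Rle_or_lt (b w) (b v); first exact: pendant_rightmost_rep rep bwv.
apply: (pendant_rightmost_rep (proper_interval_rep_opp rep)).
have [_ [_ nest]] := rep; suff: a v <= a w by lra.
apply: Rnot_lt_le => awav; apply: (nest v w vC wC).
split; [lra|split; [lra|left; lra]].
Qed.

End Pendant.

Section TailIntervals.

Variables (T : finType) (e : rel T) (v : T) (l : nat).

Local Notation tail := (tail_rel e v l).
Local Notation proj := (tail_proj v).
Local Open Scope R_scope.

Lemma proper_interval_tail_far (C : {set T}) : v \notin C ->
  proper_interval_on e C -> proper_interval_on tail [set q | proj q \in C].
Proof.
move=> vC [a [b [ab [adj nest]]]].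
exists (fun p => a (proj p)), (fun p => b (proj p)); split; [|split].
- by move=> p; rewrite inE; exact: ab.
- move=> [x|i] [y|j]; rewrite !inE /= => xC yC; rewrite ?(negbTE vC) // in xC yC.
  by move=> xy; apply: adj => //; apply: contraNneq xy => ->.
- move=> [x|i] [y|j]; rewrite !inE /= => xC yC; rewrite ?(negbTE vC) // in xC yC.
  exact: nest.
Qed.

Lemma proper_interval_tail_rightmost (C : {set T}) a b : v \in C ->
  proper_interval_rep e C a b -> rightmost_interval C a b v ->
  proper_interval_on tail [set q | proj q \in C].
Proof.
move=> vC [ab [adj nest]] [avbv below_bv].
have le_bv x : x \in C -> b x <= b v.
  by move=> xC; case: (eqVneq x v) => [->|xv]; [lra|have := below_bv x xC xv; lra].
have lt_bv x : x \in C -> a x < b v.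
  move=> xC; case: (eqVneq x v) => [->//|xv].
  by have := below_bv x xC xv; have := ab x xC; lra.
pose A (p : T + 'I_l) := match p with inl x => a x | inr j => b v + INR j end.
pose B (p : T + 'I_l) := match p with inl x => b x | inr j => b v + INR j + 1 end.
have adj_tail x (j : 'I_l) : x \in C ->
    tail (inl x) (inr j) <-> Rmax (A (inl x)) (A (inr j)) <= Rmin (B (inl x)) (B (inr j)).
  move=> xC; have := pos_INR j; rewrite /= Rmax_le_Rmin.
  case: (eqVneq x v) => [->|xv] /=; last first.
    by split=> // -[_ [_ [bvbx _]]]; exfalso; have := below_bv x xC xv; lra.
  split=> [/eqP j0|[_ [_ [jv _]]]]; first by rewrite /= j0 /=; intuition lra.
  by apply/eqP/INR_eq; rewrite /=; lra.
exists A, B; split; [|split].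
- by case=> [x|j]; rewrite inE /= => ?; [exact: ab|lra].
- case=> [x|i] [y|j]; rewrite !inE /= => pC qC pq.
  + by apply: adj => //; apply: contraNneq pq => ->.
  + exact: adj_tail.
  + by rewrite Rmax_comm Rmin_comm; exact: adj_tail.
  + have ij : nat_of_ord i <> j by move=> /ord_inj ij; rewrite ij eqxx in pq.
    rewrite Rmax_le_Rmin; split=> [/orP [] /eqP <-|[_ [le_ij [le_ji _]]]].
    * by rewrite S_INR; intuition lra.
    * by rewrite S_INR; intuition lra.
    have: (i <= j.+1)%N by apply/leP/INR_le; rewrite S_INR; lra.
    have: (j <= i.+1)%N by apply/leP/INR_le; rewrite S_INR; lra.
    lia.
- case=> [x|i] [y|j]; rewrite !inE /= => pC qC.
  + exact: nest.
  + by have := lt_bv x pC; have := pos_INR j; lra.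
  + by have := le_bv y qC; have := pos_INR i; lra.
  + lra.
Qed.

End TailIntervals.

Theorem lemma10 (T : finType) (e : rel T) (v : T) (l : nat) :
  simple_graph e -> prop_int_tree e ->
  #|[set w | e v w]| = 1 -> 1 <= l ->
  simple_graph (tail_rel e v l) /\ prop_int_tree (tail_rel e v l).
Proof.
move=> [se ie] pit /eqP/cards1P [w nbr_v] _.
have evw : e v w by have := set11 w; rewrite -nbr_v inE.
have v_nbr y : e v y -> y = w by move=> evy; apply/set1P; rewrite -nbr_v inE.
split; first by split; [exact: tail_sym | exact: tail_irreflexive].
move=> p; have [pC|[_ noC]] := pit (tail_proj v p); last first.
  right; split; first exact: connect_induced_component (tail_sym v se).
  by rewrite component_tail //; exact: tail_acyclic.
left; rewrite component_tail //.
have [vC|vC] := boolP (v \in component e (tail_proj v p));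
  last exact: proper_interval_tail_far.
have Cv : component e (tail_proj v p) = component e v.
  rewrite inE in vC; apply/setP => z.
  by rewrite !inE (same_connect (sym_connect_sym se) vC).
rewrite Cv in pC vC *.
have [a [b [rep rm]]] := exists_rightmost_rep se ie evw v_nbr pC.
exact: proper_interval_tail_rightmost vC rep rm.
Qed.
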